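(* Let $g:(0,\infty)\to(0,\infty)$ decrease monotonically to zero, let $b\ge2$, and assume that $\Lambda_g(u)/\log\log u$ is bounded from above for $u$ large enough. Then for every $\epsilon\in(0,(2d+1)^{-1})$ $$\mathbb P\Big[\liminf_{n\to\infty}\bigcap_{\mathfrak A\subseteq\mathfrak E(B_b),\,|\mathfrak A|\ge 2d+1}\ \bigcap_{z\in B_{n+b}}J_{g(n^{1-\epsilon})}(\mathfrak A\circ\tau_z)\Big]=1.$$
   Context: Let $d\ge2$, $\mathfrak E_d$ the nearest-neighbour edges of $\mathbb Z^d$. Conductances $(w_e)_{e\in\mathfrak E_d}$ are i.i.d. $(0,\infty)$-valued with law $\mathbb P$; $w$ a generic copy. $B_n=[-n,n]^d\cap\mathbb Z^d$. $\Lambda_g(u)=u^d\,\mathbb P[w\le g(u)]^{2d}$. For $\alpha>0$, $J_\alpha(\mathfrak A)=\{\exists e\in\mathfrak A: w_e>\alpha\}$. $\mathfrak E(A)=\{\{x,x+\boldsymbol e_j\}: x\in A,\ j\in\{1,\dots,d\}\}$. $\mathfrak A\circ\tau_z=\{\{x+z,y+z\}:\{x,y\}\in\mathfrak A\}$. $\liminf_n E_n=\bigcup_n\bigcap_{k\ge n}E_k$. *)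

From HB Require Import structures.
From mathcomp Require Import all_boot all_order all_algebra.
From mathcomp Require Import finmap.
From mathcomp Require Import all_classical all_reals all_analysis.
Set Implicit Arguments. Unset Strict Implicit. Unset Printing Implicit Defensive.
Import Order.TTheory GRing.Theory Num.Theory.
Local Open Scope classical_set_scope.
Local Open Scope ring_scope.

Definition vtx (d : nat) := {ffun 'I_d -> int}.

(* A nearest-neighbour edge {x, x + e_j} of Z^d is encoded (uniquely) by the
   pair (x, j) with j : 'I_d (the paper's j in {1,...,d}). *)
Definition edge (d : nat) := (vtx d * 'I_d)%type.

Definition box (d : nat) (n : nat) : set (vtx d) :=
  [set x | forall i : 'I_d, `|x i| <= n%:Z].

Definition edges_of (d : nat) (A : set (vtx d)) : set (edge d) :=
  [set e | A e.1].

Definition shift_edge (d : nat) (e : edge d) (z : vtx d) : edge d :=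
  ([ffun i => e.1 i + z i], e.2).

Definition shift_edges (d : nat) (A : {fset edge d}) (z : vtx d) : set (edge d) :=
  [set shift_edge e z | e in [set` A]].

Definition J_event (d : nat) (T : Type) (R : realType)
  (w : edge d -> T -> R) (alpha : R) (A : set (edge d)) : set T :=
  [set om | exists2 e, A e & alpha < w e om].

Definition liminf_set (T : Type) (E : nat -> set T) : set T :=
  \bigcup_n \bigcap_(k in [set k | (n <= k)%N]) E k.

Definition mutually_independent (dT : measure_display) (T : measurableType dT)
  (R : realType) (P : probability T R) (I : choiceType) (X : I -> T -> R) :=
  forall (F : {fset I}) (B : I -> set R),
    (forall i, i \in F -> measurable (B i)) ->
    P (\bigcap_(i in [set` F]) (X i @^-1` B i)) =
    (\prod_(i <- F) P (X i @^-1` B i))%E.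

(* Λ_g(u) = u^d P[w ≤ g(u)]^{2d}, where mu is the common law of the w_e *)
Definition Lambda (R : realType) (d : nat) (mu : probability R R) (g : R -> R)
  (u : R) : R :=
  u ^+ d * (fine (mu `]-oo, g u]%classic)) ^+ (2 * d).

(* Borel-Cantelli along dyadic scales.  If the event fails at some n in
   [2^t, 2^(t+1)), then a translate, by some z in B_(2^(t+1)+b), of a set of at
   least 2d+1 edges of 𝔈(B_b) has all its conductances at most
   g(n^(1-eps)) <= g(2^(t(1-eps))).  By independence and a union bound over
   these finitely many configurations this has probability at most
   c (2^t)^d p_t^(2d+1), where p_t = P[w <= g(2^(t(1-eps)))].  The growth
   hypothesis on Lambda_g gives p_t^(2d) <= C t 2^(-t(1-eps)d), so the bound is
   at most poly(t) 2^(-t(1-(2d+1)eps)/2), which is summable since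
   (2d+1)eps < 1.  Hence only finitely many dyadic blocks contain a failure. *)

From HB Require Import structures.
From mathcomp Require Import all_boot all_order all_algebra.
From mathcomp Require Import finmap.
From mathcomp Require Import all_classical all_reals all_analysis.
From mathcomp Require Import ring zify.
Set Implicit Arguments. Unset Strict Implicit. Unset Printing Implicit Defensive.
Import Order.TTheory GRing.Theory Num.Theory.
Local Open Scope classical_set_scope.
Local Open Scope ring_scope.

(* Finite index types for [B_N] and for the edges of [𝔈(B_b)], so that the
   union bound over configurations is a finite sum. *)
Definition box_code (d N : nat) := {ffun 'I_d -> 'I_(2 * N + 1)}.

Definition box_decode {d N : nat} (f : box_code d N) : vtx d :=
  [ffun i => (f i)%:Z - N%:Z].

Lemma box_decode_inj d N : injective (@box_decode d N).
Proof.
move=> f f' /ffunP eqff'; apply/ffunP => i; have := eqff' i; rewrite !ffunE.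
by move/addIr/eqP; rewrite eqz_nat => /eqP/val_inj.
Qed.

Lemma box_decodeP d N (z : vtx d) : box N z -> exists f : box_code d N, box_decode f = z.
Proof.
move=> zN; have lt_code i : (absz (z i + N%:Z)%R < 2 * N + 1)%N.
  by have := zN i; lia.
exists [ffun i => Ordinal (lt_code i)]; apply/ffunP => i; rewrite !ffunE /=.
by have := zN i; lia.
Qed.

Definition edge_code (d b : nat) := (box_code d b * 'I_d)%type.

Definition edge_decode {d b : nat} (s : edge_code d b) : edge d :=
  (box_decode s.1, s.2).

Lemma edge_decode_inj d b : injective (@edge_decode d b).
Proof. by move=> [f j] [f' j'] [] /box_decode_inj -> ->. Qed.

Lemma edge_decodeP d b (e : edge d) :
  edges_of (box b) e -> exists s : edge_code d b, edge_decode s = e.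
Proof.
move=> /box_decodeP [f fe]; exists (f, e.2).
by rewrite /edge_decode fe -surjective_pairing.
Qed.

Lemma shift_edge_inj d (z : vtx d) : injective (fun e : edge d => shift_edge e z).
Proof.
move=> [x j] [x' j'] [] /ffunP eqxx' ->; congr pair; apply/ffunP => i.
by have := eqxx' i; rewrite !ffunE => /addIr.
Qed.

Lemma card_imfset_set (K : finType) (V : choiceType) (h : K -> V) (S : {set K}) :
  injective h -> #|` [fset h s | s in S]%fset| = #|S|.
Proof.
move=> h_inj; rewrite card_imfset // cardE; apply/perm_size/uniq_perm.
- exact: enum_finmem_uniq.
- exact: enum_uniq.
- by move=> x; rewrite enum_finmemE.
Qed.

Section dyadic_analysis.
Variable R : realType.

Lemma exprn_le_fact_expR (x : R) (m : nat) : 0 <= x -> x ^+ m <= m`!%:R * expR x.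
Proof.
move=> x_ge0; rewrite mulrC -ler_pdivrMr ?ltr0n ?fact_gt0 //.
case: m => [|m]; first by rewrite expr0 fact0 divr1 -[1]addr0 (le_trans _ (expR_ge1Dx x)) ?lerD2l.
by apply: le_trans (expR_ge1Dxn m x_ge0); rewrite lerDr.
Qed.

Lemma le_geometric_of_exprn (x A rho : R) (n t : nat) : (0 < n)%N ->
  0 <= x -> 0 <= A -> 0 <= rho -> x ^+ n <= A * rho ^+ (n * t) ->
  x <= Num.max A 1 * rho ^+ t.
Proof.
move=> n_gt0 x_ge0 A_ge0 rho_ge0 le_xn.
have K_ge1 : 1 <= Num.max A 1 by rewrite le_max lexx orbT.
rewrite -(ler_pXn2r n_gt0) ?nnegrE ?mulr_ge0 ?exprn_ge0 ?(le_trans ler01 K_ge1) //.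
apply: le_trans le_xn _; rewrite exprMn -exprM mulnC ler_wpM2r ?exprn_ge0 //.
by apply: le_trans (ler_eXnr n_gt0 K_ge1); rewrite le_max lexx.
Qed.

Lemma powR_exp2 (a : R) (t : nat) : (2 ^ t)%:R `^ a = expR (a * (t%:R * ln 2)).
Proof.
rewrite /powR ifF; last by apply/negbTE; rewrite pnatr_eq0 expn_eq0.
by rewrite natrX lnXn // mulr_natl.
Qed.

Lemma lnln_bound_dyadic (f : R -> R) (a C U : R) : 0 < a ->
    (forall u, U < u -> f u <= C * ln (ln u)) ->
  exists (C' : R) (t0 : nat), forall t, (t0 <= t)%N ->
    f (expR (a * (t%:R * ln 2))) <= C' * t%:R.
Proof.
move=> a_gt0 f_le; have L_gt0 : 0 < ln 2 :> R by rewrite ln_gt0 // ltr1n.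
have aL_gt0 : 0 < a * ln 2 by rewrite mulr_gt0.
pose U' := Num.max U 1; have U'_ge1 : 1 <= U' by rewrite le_max lexx orbT.
have lnU'_ge0 : 0 <= ln U' by rewrite ln_ge0.
pose t0 := Num.Def.archi_bound ((ln U' + 1) / (a * ln 2)).
have t0_gt : (ln U' + 1) / (a * ln 2) < t0%:R.
  by apply: archi_boundP; rewrite divr_ge0 ?addr_ge0 // ltW.
exists (`|C| * (a * ln 2)), t0 => t le_t0t.
pose y := a * (t%:R * ln 2).
have y_gt : ln U' + 1 < y.
  rewrite /y mulrCA -ltr_pdivrMr //; apply: lt_le_trans t0_gt _.
  by rewrite ler_nat.
have y_ge1 : 1 <= y by apply: le_trans (ltW y_gt); rewrite lerDr.
apply: le_trans (f_le _ _) _.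
  apply: le_lt_trans (_ : U <= U') _; first by rewrite le_max lexx.
  by rewrite -[U']lnK ?posrE ?(lt_le_trans ltr01) // ltr_expR (lt_trans _ y_gt) // ltrDl.
rewrite expRK; apply: le_trans (_ : C * ln y <= `|C| * ln y) _.
  by rewrite ler_wpM2r ?ln_ge0 // real_ler_norm ?num_real.
rewrite -mulrA ler_wpM2l // mulrAC -mulrA -/y.
exact/ltW/ln_sublinear/(lt_le_trans ltr01 y_ge1).
Qed.

Lemma dyadic_power_le (d : nat) (a x q B : R) : 0 <= q ->
    expR (a * x) ^+ d * q ^+ (2 * d) <= B ->
  (expR x ^+ d * q ^+ (2 * d + 1)) ^+ (2 * d) <=
    B ^+ (2 * d + 1) * expR (- (x * d%:R * (a * (2 * d + 1)%:R - 2 * d%:R))).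
Proof.
move=> q_ge0 le_B; set Z := expR (a * x) ^+ d * q ^+ (2 * d) in le_B.
have Z_ge0 : 0 <= Z by rewrite mulr_ge0 ?exprn_ge0 ?expR_ge0.
have -> : (expR x ^+ d * q ^+ (2 * d + 1)) ^+ (2 * d) =
    Z ^+ (2 * d + 1) * expR (- (x * d%:R * (a * (2 * d + 1)%:R - 2 * d%:R))).
  rewrite /Z !exprMn -!exprM -!expRM_natl [RHS]mulrAC -expRD [(2 * d * _)%N]mulnC.
  by congr (expR _ * _); rewrite !natrM !natrD; ring.
by apply: ler_wpM2r; rewrite ?expR_ge0 // lerXn2r ?nnegrE ?(le_trans Z_ge0).
Qed.

Lemma natrX_expR_le_geometric (m n t : nat) (gamma : R) : (0 < n)%N -> 0 < gamma ->
  t%:R ^+ m * expR (- (t%:R * gamma)) <=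
    m`!%:R / (gamma / 2) ^+ m * expR (- (gamma / (2 * n%:R))) ^+ (n * t).
Proof.
move=> n_gt0 gamma_gt0; have hgamma_gt0 : 0 < gamma / 2 by rewrite divr_gt0.
have := exprn_le_fact_expR m (mulr_ge0 (ler0n R t) (ltW hgamma_gt0)).
rewrite exprMn -ler_pdivlMr ?exprn_gt0 // mulrAC => le_tm.
rewrite -expRM_natl; apply: le_trans (ler_wpM2r (expR_ge0 _) le_tm) _.
rewrite -[X in X <= _]mulrA -expRD.
suff -> : (n * t)%:R * - (gamma / (2 * n%:R)) = t%:R * (gamma / 2) - t%:R * gamma by [].
by rewrite natrM; field; rewrite pnatr_eq0 -lt0n.
Qed.

Lemma dyadic_box_card_le (d b t : nat) :
  ((2 * (2 ^ t.+1 + b) + 1) ^ d <= ((2 * b + 5) * 2 ^ t) ^ d)%N.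
Proof.
case: d => // d; rewrite leq_exp2r // expnS.
have : (0 < 2 ^ t)%N by rewrite expn_gt0.
move: (2 ^ t)%N => X; nia.
Qed.

Lemma dyadic_terms_geometric (d b t0 : nat) (eps c C : R) (q : nat -> R) :
    (0 < d)%N -> eps * (2 * d + 1)%:R < 1 -> 0 <= c ->
    (forall t, 0 <= q t) ->
    (forall t, (t0 <= t)%N ->
       expR ((1 - eps) * (t%:R * ln 2)) ^+ d * q t ^+ (2 * d) <= C * t%:R) ->
  exists K r : R, 0 < r < 1 /\ forall t, (t0 <= t)%N ->
    c * ((2 * (2 ^ t.+1 + b) + 1) ^ d)%:R * q t ^+ (2 * d + 1) <= K * r ^+ t.
Proof.
move=> d_gt0 eps_small c_ge0 q_ge0 q_le.
have L_gt0 : 0 < ln 2 :> R by rewrite ln_gt0 // ltr1n.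
set m := (2 * d + 1)%N.
(* The [2d]-th power of the term decays like [t^m 2^(-t d (1 - eps m))]:
   [2^(2 d^2 t)] from the box count against [2^(-t (1 - eps) d m)] from the tail. *)
set gamma := ln 2 * d%:R * (1 - eps * m%:R).
have gamma_gt0 : 0 < gamma by rewrite !mulr_gt0 ?ltr0n // subr_gt0.
set c2 := c * (2 * b + 5)%:R ^+ d.
have c2_ge0 : 0 <= c2 by rewrite mulr_ge0 ?exprn_ge0.
set A := c2 ^+ (2 * d) * `|C| ^+ m * (m`!%:R / (gamma / 2) ^+ m).
have A_ge0 : 0 <= A.
  by rewrite !mulr_ge0 ?exprn_ge0 ?invr_ge0 ?exprn_ge0 ?divr_ge0 // ltW.
exists (Num.max A 1), (expR (- (gamma / (2 * (2 * d)%:R)))); split.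
  by rewrite expR_gt0 expR_lt1 oppr_lt0 divr_gt0 // mulr_gt0 // ltr0n muln_gt0.
move=> t le_t0t; pose X : R := expR (t%:R * ln 2).
have X_eq : X = (2 ^ t)%:R by rewrite /X expRM_natl lnK ?posrE // natrX.
have Cq_le : expR ((1 - eps) * (t%:R * ln 2)) ^+ d * q t ^+ (2 * d) <= `|C| * t%:R.
  by apply: le_trans (q_le t le_t0t) _; rewrite ler_wpM2r // real_ler_norm ?num_real.
have term_le : c * ((2 * (2 ^ t.+1 + b) + 1) ^ d)%:R * q t ^+ m <=
    c2 * (X ^+ d * q t ^+ m).
  rewrite mulrA ler_wpM2r ?exprn_ge0 // -mulrA ler_wpM2l // -exprMn X_eq.
  by rewrite -natrM -natrX ler_nat dyadic_box_card_le.
have term_ge0 : 0 <= c * ((2 * (2 ^ t.+1 + b) + 1) ^ d)%:R * q t ^+ m.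
  by rewrite !mulr_ge0 ?exprn_ge0.
have gamma_eq : t%:R * ln 2 * d%:R * ((1 - eps) * m%:R - 2 * d%:R) = t%:R * gamma.
  by rewrite /gamma /m natrD natrM; ring.
apply: (le_geometric_of_exprn (n := 2 * d)); rewrite ?muln_gt0 ?expR_ge0 //.
apply: le_trans (lerXn2r _ _ _ term_le) _;
  rewrite ?nnegrE ?mulr_ge0 ?exprn_ge0 ?expR_ge0 //.
rewrite exprMn.
apply: le_trans (ler_wpM2l (exprn_ge0 _ c2_ge0) (dyadic_power_le (q_ge0 t) Cq_le)) _.
rewrite gamma_eq [(_ * t%:R) ^+ _]exprMn.
have -> : c2 ^+ (2 * d) * (`|C| ^+ m * t%:R ^+ m * expR (- (t%:R * gamma))) =
    c2 ^+ (2 * d) * `|C| ^+ m * (t%:R ^+ m * expR (- (t%:R * gamma))).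
  by rewrite !mulrA.
rewrite /A -[in X in _ <= X]mulrA ler_wpM2l ?mulr_ge0 ?exprn_ge0 //.
by apply: natrX_expR_le_geometric; rewrite ?muln_gt0.
Qed.

End dyadic_analysis.

Definition lower_tail (R : realType) (mu : probability R R) (x : R) : R :=
  fine (mu `]-oo, x]%classic).

Lemma lower_tail_ge0 (R : realType) (mu : probability R R) x : 0 <= lower_tail mu x.
Proof. exact/fine_ge0/measure_ge0. Qed.

Lemma lower_tail_le1 (R : realType) (mu : probability R R) x : lower_tail mu x <= 1.
Proof. by rewrite -lee_fin fineK ?probability_le1 ?fin_num_measure. Qed.

Lemma sume_const (R : realType) (I : finType) (c : R) :
  (\sum_(i : I) c%:E)%E = (c *+ #|I|)%:E.
Proof. by rewrite sumEFin sumr_const. Qed.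

Section measure_union.
Local Open Scope ereal_scope.

Lemma measure_bigsetU_le dT (T : measurableType dT) (R : realType)
    (mu : {measure set T -> \bar R}) (I : Type) (r : seq I) (p : pred I)
    (F : I -> set T) :
  (forall i, measurable (F i)) ->
  mu (\big[setU/set0]_(i <- r | p i) F i) <= \sum_(i <- r | p i) mu (F i).
Proof.
move=> mF; elim: r => [|i r IHr]; first by rewrite !big_nil measure0.
rewrite !big_cons; case: ifP => // _.
apply: le_trans (measureU2 _ _ _) (leeD _ IHr) => //.
exact: bigsetU_measurable.
Qed.

End measure_union.

Lemma countable_bigcup_measurable dT (T : measurableType dT) (I : countType)
    (D : set I) (F : I -> set T) :
  (forall i, D i -> measurable (F i)) -> measurable (\bigcup_(i in D) F i).
Proof.
move=> mF; rewrite bigcup_mkcond; apply: countable_bigcupT_measurable.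
  exact: countableP.
by move=> i; case: ifPn => // /set_mem /mF.
Qed.

Lemma countable_bigcap_measurable dT (T : measurableType dT) (I : countType)
    (D : set I) (F : I -> set T) :
  (forall i, D i -> measurable (F i)) -> measurable (\bigcap_(i in D) F i).
Proof.
move=> mF; rewrite -[X in measurable X]setCK setC_bigcap; apply: measurableC.
by apply: countable_bigcup_measurable => i /mF /measurableC.
Qed.

Lemma nneseries_geometric_lt_pinfty (R : realType) (u : nat -> \bar R) (K r : R) :
  0 < r < 1 -> (forall n, 0 <= u n <= (K * r ^+ n)%:E)%E ->
  (\sum_(0 <= n <oo) u n < +oo)%E.
Proof.
move=> /andP [r_gt0 r_lt1] u_bnd.
have K_ge0 : 0 <= K.
  by have /andP [u0_ge0 /(le_trans u0_ge0)] := u_bnd 0%N; rewrite expr0 mulr1 lee_fin.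
apply: (le_lt_trans (y := (K / (1 - r))%:E)); last exact: ltry.
apply: lime_le; first by apply: is_cvg_nneseries => n _ _; case/andP: (u_bnd n).
apply: nearW => n; apply: (le_trans (y := (\sum_(0 <= k < n) (K * r ^+ k)%:E)%E)).
  by apply: lee_sum => k _; case/andP: (u_bnd k).
rewrite sumEFin lee_fin.
by have := geometric_le_lim n K_ge0 r_gt0; rewrite gtr0_norm // => /(_ r_lt1).
Qed.

Lemma compl_liminf_set_sub (T : Type) (E F : nat -> set T) (h : nat -> nat) (k0 : nat) :
    (forall n, exists k1, forall k, (k1 <= k)%N -> (n <= h k)%N) ->
    (forall k, (k0 <= k)%N -> ~` E k `<=` F (h k)) ->
  ~` liminf_set E `<=` lim_sup_set F.
Proof.
move=> h_unbounded EF om not_liminf n _.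
have [k1 h_ge] := h_unbounded n.
have [k /andP [k0k k1k] not_Ek] : exists2 k, (k0 <= k)%N && (k1 <= k)%N & ~ E k om.
  apply: contrapT => all_E; apply: not_liminf; exists (maxn k0 k1) => // k /= le_k.
  apply: contrapT => not_Ek; apply: all_E; exists k => //.
  by rewrite -!geq_max.
by exists (h k); [exact: h_ge | exact: EF].
Qed.

Lemma probability_eq1_of_compl_null dT (T : measurableType dT) (R : realType)
    (P : probability T R) (A N : set T) :
  measurable A -> measurable N -> ~` A `<=` N -> P N = 0%E -> P A = 1%E.
Proof.
move=> mA mN AN PN0.
have : P (~` A) = 0%E.
  by apply/eqP; rewrite eq_le measure_ge0 andbT -PN0 le_measure ?inE //; exact: measurableC.
by rewrite probability_setC // => /eqP; rewrite sube_eq // add0e => /eqP <-.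
Qed.

Section edge_weights.
Variables (R : realType) (d : nat) (dT : measure_display) (T : measurableType dT).
Variables (P : probability T R) (mu : probability R R) (w : edge d -> T -> R).
Hypothesis w_meas : forall e, measurable_fun setT (w e).
Hypothesis w_law : forall e (B : set R), measurable B -> P (w e @^-1` B) = mu B.
Hypothesis w_indep : mutually_independent P w.

Lemma measurable_weight_preimage e (B : set R) :
  measurable B -> measurable (w e @^-1` B).
Proof. by move=> mB; rewrite -[_ @^-1` _]setTI; exact: w_meas. Qed.

Definition all_weak (al : R) (F : {fset edge d}) : set T :=
  \bigcap_(e in [set` F]) (w e @^-1` `]-oo, al]%classic).

Lemma measurable_all_weak al F : measurable (all_weak al F).
Proof.
apply: fin_bigcap_measurable => [|e _]; first exact: finite_fset.
by apply: measurable_weight_preimage; exact: measurable_itv.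
Qed.

Lemma prob_all_weak al F : P (all_weak al F) = (lower_tail mu al ^+ #|` F|)%:E.
Proof.
rewrite w_indep => [|e _]; last exact: measurable_itv.
have law_e e : P (w e @^-1` `]-oo, al]%classic) = (lower_tail mu al)%:E.
  by rewrite w_law ?fineK ?fin_num_measure //; exact: measurable_itv.
under eq_bigr => e _ do rewrite law_e.
by rewrite prodEFin big_const_seq iter_mulr_1.
Qed.

Definition shifted_edges b (S : {set edge_code d b}) (z : vtx d) : {fset edge d} :=
  [fset shift_edge (edge_decode s) z | s in S]%fset.

Definition bad_event (b N : nat) (al : R) : set T :=
  \big[setU/set0]_(S : {set edge_code d b} | (2 * d + 1 <= #|S|)%N)
    \big[setU/set0]_(f : box_code d N) all_weak al (shifted_edges S (box_decode f)).

Lemma measurable_bad_event b N al : measurable (bad_event b N al).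
Proof.
by apply: bigsetU_measurable => S _; apply: bigsetU_measurable => f _;
  exact: measurable_all_weak.
Qed.

Lemma prob_bad_event_le b N al : (P (bad_event b N al) <=
  (#|{set edge_code d b}|%:R * ((2 * N + 1) ^ d)%:R * lower_tail mu al ^+ (2 * d + 1))%:E)%E.
Proof.
set c := lower_tail mu al ^+ (2 * d + 1).
have c_ge0 : 0 <= c by rewrite exprn_ge0 ?lower_tail_ge0.
pose shifts (S : {set edge_code d b}) :=
  \big[setU/set0]_(f : box_code d N) all_weak al (shifted_edges S (box_decode f)).
have measurable_shifts S : measurable (shifts S).
  by apply: bigsetU_measurable => f _; exact: measurable_all_weak.
have shifts_le (S : {set edge_code d b}) : (2 * d + 1 <= #|S|)%N ->
    (P (shifts S) <= (((2 * N + 1) ^ d)%:R * c)%:E)%E.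
  move=> S_big.
  apply: le_trans (measure_bigsetU_le P _ _ (fun f => measurable_all_weak _ _)) _.
  apply: le_trans (lee_sum (g := fun=> c%:E) _ _) _.
    move=> f _ /=; rewrite prob_all_weak lee_fin.
    rewrite ler_wiXn2l ?lower_tail_ge0 ?lower_tail_le1 // card_imfset_set //.
    by move=> s s' /shift_edge_inj /edge_decode_inj.
  by rewrite sume_const card_ffun !card_ord mulr_natl.
apply: le_trans (measure_bigsetU_le P _ _ measurable_shifts) _.
apply: le_trans (lee_sum _ shifts_le) _.
rewrite big_mkcond /=.
apply: le_trans (lee_sum (g := fun=> (((2 * N + 1) ^ d)%:R * c)%:E) _ _) _.
  by move=> S _; case: ifP => // _; rewrite lee_fin mulr_ge0.
by rewrite sume_const lee_fin -mulrA [_%:R * (_ * c)]mulr_natl.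
Qed.

Lemma measurable_J_event al (A : set (edge d)) : measurable (J_event w al A).
Proof.
have -> : J_event w al A = \bigcup_(e in A) (w e @^-1` `]al, +oo[%classic).
  apply/seteqP; split => om [e Ae w_e]; exists e => //.
    by rewrite /= in_itv /= andbT.
  by move: w_e; rewrite /= in_itv /= andbT.
apply: countable_bigcup_measurable => e _.
by apply: measurable_weight_preimage; exact: measurable_itv.
Qed.

Definition all_translates_strong (b N : nat) (al : R) : set T :=
  \bigcap_(A in [set A : {fset edge d} |
      [set` A] `<=` edges_of (box b) /\ (2 * d + 1 <= #|` A|)%N])
    \bigcap_(z in box N) J_event w al (shift_edges A z).

Lemma measurable_all_translates_strong b N al :
  measurable (all_translates_strong b N al).
Proof.
apply: countable_bigcap_measurable => A _.
by apply: countable_bigcap_measurable => z _; exact: measurable_J_event.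
Qed.

Lemma not_all_translates_strong b N N' al al' : (N <= N')%N -> al <= al' ->
  ~` all_translates_strong b N al `<=` bad_event b N' al'.
Proof.
move=> le_NN' le_alal'; rewrite /all_translates_strong setC_bigcap.
move=> om [A [A_box A_big]]; rewrite setC_bigcap => -[z z_box /= not_J].
have [f def_z] : exists f : box_code d N', box_decode f = z.
  by apply: box_decodeP => i; apply: le_trans (z_box i) _; rewrite lez_nat.
subst z.
pose S : {set edge_code d b} := [set s | edge_decode s \in A]%SET.
have A_codes : A = [fset edge_decode s | s in S]%fset.
  apply/fsetP => e; apply/idP/imfsetP => [eA|[s + ->]]; last by rewrite inE.
  by have [s se] := edge_decodeP (A_box e eA); exists s; rewrite // inE se.
rewrite /bad_event -bigcup_seq_cond; exists S.
  by rewrite /= mem_index_enum -(card_imfset_set _ (@edge_decode_inj d b)) -A_codes.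
rewrite -bigcup_seq_cond; exists f; first by rewrite /= mem_index_enum.
move=> e /= /imfsetP [s sS ->]; rewrite /= in_itv /=.
apply: le_trans le_alal'; rewrite leNgt; apply/negP => weak; apply: not_J.
exists (shift_edge (edge_decode s) (box_decode f)) => //.
by exists (edge_decode s) => //; rewrite inE in sS.
Qed.

(* Covers the failures of the event at every [n] in [[2^t, 2^(t+1))]. *)
Definition dyadic_bad_event (g : R -> R) (a : R) (b t : nat) : set T :=
  bad_event b (2 ^ t.+1 + b) (g ((2 ^ t)%:R `^ a)).

Lemma compl_liminf_translates_sub (g : R -> R) (a : R) (b t0 : nat) :
    (forall u v, 0 < u -> u <= v -> g v <= g u) -> 0 <= a ->
  ~` liminf_set (fun n => all_translates_strong b (n + b) (g (n%:R `^ a))) `<=`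
    lim_sup_set (fun j => dyadic_bad_event g a b (j + t0)).
Proof.
move=> g_mono a_ge0.
apply: (compl_liminf_set_sub (h := fun k => (trunc_log 2 k - t0)%N) (k0 := (2 ^ t0)%N)).
  move=> n; exists (2 ^ (n + t0))%N => k le_k.
  by have := trunc_log_max (isT : (1 < 2)%N) le_k; lia.
move=> k le_k; have k_gt0 : (0 < k)%N by apply: leq_trans le_k; rewrite expn_gt0.
rewrite /dyadic_bad_event subnK; last exact: trunc_log_max le_k.
apply: not_all_translates_strong; first by rewrite leq_add2r ltnW // trunc_log_ltn.
apply: g_mono; first by rewrite powR_gt0 // ltr0n expn_gt0.
by rewrite ge0_ler_powR ?nnegrE ?ler0n // ler_nat trunc_logP.
Qed.

Lemma bad_events_dyadic_summable (g : R -> R) (b : nat) (eps : R) :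
    (0 < d)%N -> eps * (2 * d + 1)%:R < 1 -> 0 < 1 - eps ->
    (exists C U : R, forall u, U < u -> Lambda d mu g u <= C * ln (ln u)) ->
  exists t0,
    (\sum_(0 <= j <oo) P (dyadic_bad_event g (1 - eps)%R b (j + t0)) < +oo)%E.
Proof.
move=> d_gt0 eps_small a_gt0 [C [U Lambda_le]].
have [C' [t0 Lambda_dyadic_le]] := lnln_bound_dyadic a_gt0 Lambda_le.
pose q t := lower_tail mu (g ((2 ^ t)%:R `^ (1 - eps))).
have q_le t : (t0 <= t)%N ->
    expR ((1 - eps) * (t%:R * ln 2)) ^+ d * q t ^+ (2 * d) <= C' * t%:R.
  by rewrite /q powR_exp2; exact: Lambda_dyadic_le.
have [K [r [r_bnd term_le]]] := dyadic_terms_geometric b d_gt0 eps_small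
  (ler0n _ #|{set edge_code d b}|) (fun t => lower_tail_ge0 mu _) q_le.
exists t0; apply: (nneseries_geometric_lt_pinfty (K := K * r ^+ t0) r_bnd) => j.
rewrite measure_ge0 /=; apply: le_trans (prob_bad_event_le _ _ _) _.
rewrite lee_fin; apply: le_trans (term_le _ (leq_addl _ _)) _.
by rewrite exprD [r ^+ j * _]mulrC mulrA.
Qed.

End edge_weights.

Theorem corollary2p4 (R : realType) (d : nat) (hd : (2 <= d)%N)
  (dT : measure_display) (T : measurableType dT) (P : probability T R)
  (mu : probability R R) (w : edge d -> T -> R)
  (w_meas : forall e, measurable_fun setT (w e))
  (w_pos : forall e om, 0 < w e om)
  (w_law : forall e (B : set R), measurable B -> P (w e @^-1` B) = mu B)
  (w_indep : mutually_independent P w)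
  (g : R -> R)
  (g_pos : forall u, 0 < u -> 0 < g u)
  (g_mono : forall u v, 0 < u -> u <= v -> g v <= g u)
  (g_lim : g x @[x --> +oo] --> 0)
  (b : nat) (hb : (2 <= b)%N)
  (hLambda : exists C U : R, forall u, U < u ->
      Lambda d mu g u <= C * ln (ln u))
  (eps : R) (heps0 : 0 < eps) (heps1 : eps < (2 * d + 1)%:R^-1) :
  P (liminf_set (fun n : nat =>
       \bigcap_(A in [set A : {fset edge d} |
                        [set` A] `<=` edges_of (@box d b) /\ (2 * d + 1 <= #|` A|)%N])
         \bigcap_(z in @box d (n + b))
           J_event w (g ((n%:R : R) `^ (1 - eps))) (shift_edges A z))) = 1%E.
Proof.
have d_gt0 : (0 < d)%N by apply: leq_trans hd.
have eps_small : eps * (2 * d + 1)%:R < 1.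
  by rewrite -ltr_pdivlMr ?div1r // ltr0n addn1.
have a_gt0 : 0 < 1 - eps.
  by rewrite subr_gt0 (lt_le_trans heps1) // invf_le1 ?ler1n ?ltr0n ?addn1.
have [t0 bad_summable] :=
  bad_events_dyadic_summable w_meas w_law w_indep b d_gt0 eps_small a_gt0 hLambda.
have compl_sub := compl_liminf_translates_sub (w := w) (b := b) t0 g_mono (ltW a_gt0).
apply: (probability_eq1_of_compl_null _ _ compl_sub).
- apply: bigcupT_measurable => n; apply: bigcap_measurableType => k _.
  exact: measurable_all_translates_strong.
- by apply: bigcapT_measurable => n; apply: bigcup_measurable => j _; exact: measurable_bad_event.
- by apply: lim_sup_set_cvg0 bad_summable => j; exact: measurable_bad_event.
Qed.
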